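(* Let $n=1$, $0<\alpha<1$, and on $\mathbb{R}$ let $d\sigma(y)=e^y\,dy$ and $d\omega(x)=\mathbf{1}_{[0,1]}(x)\,dx$. Then $A_2^\alpha(\sigma,\omega)=\infty$, while there is a constant $C=C(\alpha)<\infty$ such that $$\int_I|I_\alpha(\mathbf{1}_I\sigma)|^2\,d\omega\le C\,|3I|_\sigma\quad\text{for every bounded interval } I\subset\mathbb{R},$$ i.e. $\mathfrak{T}_{I_\alpha}(3)(\sigma,\omega)<\infty$.
   Context: On $\mathbb{R}$, $I_\alpha(f\mu)(x)=\int|x-y|^{\alpha-1}f(y)\,d\mu(y)$. For an interval $I$, $3I$ is the concentric interval of three times the length, $|I|_\mu=\mu(I)$. $A_2^\alpha(\sigma,\omega)=\sup_I\frac{|I|_\sigma|I|_\omega}{|I|^{2(1-\alpha)}}$ over intervals $I$. $\mathfrak{T}_{I_\alpha}(3)(\sigma,\omega)$ is the best constant $C$ in $\int_I|I_\alpha(\mathbf{1}_I\sigma)|^2d\omega\le C^2|3I|_\sigma$ over all intervals $I$. *)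

From Stdlib Require Import Reals Lra ClassicalEpsilon.
Open Scope R_scope.

(* Integral of a nonnegative function over [a,b] (a <= b), defined as the
   lower (Darboux) integral: the supremum of the integrals of step functions
   lying below f on [a,b].  For nonnegative functions that are continuous
   except at finitely many points (possibly with integrable singularities)
   this coincides with the Lebesgue integral. *)
Definition lower_sums (f : R -> R) (a b : R) : R -> Prop :=
  fun r => exists phi : StepFun a b,
    (forall t, a <= t <= b -> phi t <= f t) /\ r = RiemannInt_SF phi.

Definition int_finite (f : R -> R) (a b : R) : Prop :=
  bound (lower_sums f a b).

(* Value of the integral (meaningful when int_finite holds; 0 otherwise). *)
Definition nnint (f : R -> R) (a b : R) : R :=
  match excluded_middle_informative
          (bound (lower_sums f a b) /\ exists x, lower_sums f a b x) with
  | left H => proj1_sig (completeness _ (proj1 H) (proj2 H))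
  | right _ => 0
  end.

Definition sigma_dens (y : R) : R := exp y.
Definition omega_dens (x : R) : R :=
  if Rle_dec 0 x then (if Rle_dec x 1 then 1 else 0) else 0.

Definition sigma_meas (a b : R) : R := nnint sigma_dens a b.
Definition omega_meas (a b : R) : R := nnint omega_dens a b.

Definition frac_kernel (alpha x y : R) : R :=
  Rpower (Rabs (x - y)) (alpha - 1) * sigma_dens y.

Definition I_alpha_sigma (alpha a b x : R) : R :=
  nnint (frac_kernel alpha x) a b.

Definition A2_quot (alpha a b : R) : R :=
  sigma_meas a b * omega_meas a b / Rpower (b - a) (2 * (1 - alpha)).

Definition testing_integrand (alpha a b : R) (x : R) : R :=
  (I_alpha_sigma alpha a b x) ^ 2 * omega_dens x.

From Stdlib Require Import Reals Lra Lia RList ClassicalEpsilon.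
Open Scope R_scope.

(* For [A_2], the interval [0,b] has
   [|I|_sigma >= exp (b-1)] and [|I|_omega >= 1] while [|I|^(2(1-al)) <= b^2].
   For the testing condition, a lower sum of [f] over [a,b] is at most [G b - G a]
   as soon as every constant below [f] on a subinterval [(c,d)] has area at most
   [G d - G c]; such a [G] is assembled from the primitives of [|x-t|^(al-1)] and
   [exp].  Near [x] in [0,1] the density [exp t] is bounded and away from [x] the
   kernel is at most 1, so [I_alpha(1_I sigma)(x) <= 6 e^2/al + e^b].  The testing
   integral is then at most [(6 e^2/al + e^b)^2 |I /\ [0,1]|], and since [a < 1]
   this is dominated by the sigma-mass of the right third [[b, b + |I|]] of [3I]. *)

Definition upper_primitive (g G : R -> R) (c d : R) : Prop :=
  forall v, (forall t, c < t < d -> v <= g t) -> v * (d - c) <= G d - G c.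

Lemma upper_primitive_split g G c m d : c <= m <= d ->
  upper_primitive g G c m -> upper_primitive g G m d -> upper_primitive g G c d.
Proof.
  intros Hm Pcm Pmd v Hv.
  assert (Hcm := Pcm v (fun t Ht => Hv t ltac:(lra))).
  assert (Hmd := Pmd v (fun t Ht => Hv t ltac:(lra))).
  lra.
Qed.

Lemma upper_primitive_weaken g1 g2 G1 G2 c d :
  (forall t, c < t < d -> g1 t <= g2 t) -> G2 d - G2 c <= G1 d - G1 c ->
  upper_primitive g2 G2 c d -> upper_primitive g1 G1 c d.
Proof.
  intros Hg HG P v Hv.
  enough (v * (d - c) <= G2 d - G2 c) by lra.
  apply P; intros t Ht; apply Rle_trans with (g1 t); auto.
Qed.

Lemma upper_primitive_reflect g G c d : upper_primitive g G c d ->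
  upper_primitive (fun t => g (- t)) (fun y => - G (- y)) (- d) (- c).
Proof.
  intros P v Hv.
  assert (Hcd : v * (d - c) <= G d - G c).
  { apply P; intros t Ht; rewrite <- (Ropp_involutive t); apply Hv; lra. }
  rewrite !Ropp_involutive; lra.
Qed.

Lemma upper_primitive_of_point g G c d t0 : c < t0 < d ->
  g t0 * (d - c) <= G d - G c -> upper_primitive g G c d.
Proof.
  intros Ht0 Hg v Hv.
  assert (v <= g t0) by (apply Hv; exact Ht0).
  apply Rle_trans with (g t0 * (d - c)); [apply Rmult_le_compat_r|]; lra.
Qed.

Lemma upper_primitive_const g G B c d : c < d ->
  (forall t, c < t < d -> g t <= B) -> B * (d - c) <= G d - G c ->
  upper_primitive g G c d.
Proof.
  intros Hcd Hg HB. apply upper_primitive_of_point with ((c + d) / 2); [lra|].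
  apply Rle_trans with (B * (d - c)); [apply Rmult_le_compat_r; [lra | apply Hg; lra] | exact HB].
Qed.

Lemma upper_primitive_of_derivative g G c d : c < d ->
  (forall t, c <= t <= d -> derivable_pt_lim G t (g t)) ->
  upper_primitive g G c d.
Proof.
  intros Hcd HG. destruct (MVT_cor2 G g c d Hcd HG) as [t0 [Heq Ht0]].
  apply upper_primitive_of_point with t0; lra.
Qed.

Lemma upper_primitive_by_regions g G p q : p <= q ->
  (forall c d, c < d <= p -> upper_primitive g G c d) ->
  (forall c d, p <= c -> c < d <= q -> upper_primitive g G c d) ->
  (forall c d, q <= c -> c < d -> upper_primitive g G c d) ->
  forall c d, c < d -> upper_primitive g G c d.
Proof.
  intros Hpq Plow Pmid Phigh.
  assert (Pup : forall c d, p <= c -> c < d -> upper_primitive g G c d).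
  { intros c d Hc Hcd.
    destruct (Rle_dec d q); [apply Pmid; lra|].
    destruct (Rle_dec q c); [apply Phigh; lra|].
    apply upper_primitive_split with q; [lra | apply Pmid | apply Phigh]; lra. }
  intros c d Hcd.
  destruct (Rle_dec p c); [apply Pup; lra|].
  destruct (Rle_dec d p); [apply Plow; lra|].
  apply upper_primitive_split with p; [lra | apply Plow | apply Pup]; lra.
Qed.

Lemma Int_SF_le_increment (phi f G : R -> R) a b (l lf : list R) :
  (forall t, a <= t <= b -> phi t <= f t) ->
  (forall c d, a <= c -> c < d -> d <= b -> upper_primitive f G c d) ->
  ordered_Rlist l -> length l = S (length lf) ->
  (forall i, (i < pred (length l))%nat ->
     constant_D_eq phi (open_interval (pos_Rl l i) (pos_Rl l (S i))) (pos_Rl lf i)) ->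
  a <= pos_Rl l 0 -> pos_Rl l (pred (length l)) <= b ->
  Int_SF lf l <= G (pos_Rl l (pred (length l))) - G (pos_Rl l 0).
Proof.
  intros Hphi HG; revert lf.
  induction l as [|p l IH]; intros lf Hord Hlen Hconst Ha Hb; [discriminate|].
  destruct l as [|q l]; [destruct lf; simpl; lra|].
  destruct lf as [|v lf]; [discriminate|].
  change (Int_SF (v :: lf) (p :: q :: l)) with (v * (q - p) + Int_SF lf (q :: l)).
  change (pos_Rl (p :: q :: l) (pred (length (p :: q :: l))))
    with (pos_Rl (q :: l) (pred (length (q :: l)))) in *.
  change (pos_Rl (p :: q :: l) 0) with p in *.
  set (e := pos_Rl (q :: l) (pred (length (q :: l)))) in *.
  assert (Hpq : p <= q) by (apply (Hord 0%nat); simpl; lia).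
  assert (Hqe : q <= e) by (apply RList_P7; [exact (RList_P4 _ _ Hord) | left; reflexivity]).
  assert (Htail : Int_SF lf (q :: l) <= G e - G q).
  { apply IH; [exact (RList_P4 _ _ Hord) | simpl in *; lia | | simpl; lra | exact Hb].
    intros i Hi; apply (Hconst (S i)); simpl in *; lia. }
  assert (Hhead : v * (q - p) <= G q - G p).
  { destruct (Req_dec p q) as [<-|Hne]; [lra|].
    apply HG; try lra. intros t Ht.
    assert (Hv := Hconst 0%nat ltac:(simpl; lia) t Ht); simpl in Hv.
    rewrite <- Hv. apply Hphi.
    unfold open_interval in Ht; simpl in Ht; lra. }
  lra.
Qed.

Lemma lower_sum_le_increment f G a b : a <= b ->
  (forall c d, a <= c -> c < d -> d <= b -> upper_primitive f G c d) ->
  forall r, lower_sums f a b r -> r <= G b - G a.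
Proof.
  intros Hab HG r [phi [Hphi ->]].
  unfold RiemannInt_SF. destruct (Rle_dec a b) as [_|]; [|lra].
  destruct (StepFun_P1 phi) as (Hord & Hfirst & Hlast & Hlen & Hconst).
  rewrite Rmin_left in Hfirst by lra. rewrite Rmax_right in Hlast by lra.
  assert (Hint := Int_SF_le_increment phi f G a b _ _ Hphi HG Hord Hlen Hconst
    ltac:(lra) ltac:(lra)).
  rewrite Hfirst, Hlast in Hint; exact Hint.
Qed.

Lemma nnint_le f a b B : 0 <= B ->
  (forall r, lower_sums f a b r -> r <= B) -> nnint f a b <= B.
Proof.
  intros HB Hr. unfold nnint.
  destruct excluded_middle_informative; [|lra].
  destruct (completeness _ _ _) as [m [Hub Hleast]]; simpl.
  apply Hleast. intros r Hr'; apply Hr; exact Hr'.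
Qed.

Lemma int_finite_of_lower_sums_le f a b B :
  (forall r, lower_sums f a b r -> r <= B) -> int_finite f a b.
Proof. intros Hr. exists B. intros r Hr'; apply Hr; exact Hr'. Qed.

Lemma lower_sum_le_nnint f a b r :
  int_finite f a b -> lower_sums f a b r -> r <= nnint f a b.
Proof.
  intros Hfin Hr. unfold nnint.
  destruct excluded_middle_informative as [|Hx].
  - destruct (completeness _ _ _) as [m [Hub Hleast]]; simpl. apply Hub; exact Hr.
  - exfalso; apply Hx; split; [exact Hfin | exists r; exact Hr].
Qed.

Lemma nnint_ge0 f a b : a <= b ->
  (forall t, a <= t <= b -> 0 <= f t) -> 0 <= nnint f a b.
Proof.
  intros Hab Hf. unfold nnint.
  destruct excluded_middle_informative; [|lra].
  destruct (completeness _ _ _) as [m [Hub Hleast]]; simpl. apply Hub.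
  exists (mkStepFun (StepFun_P4 a b 0)). split.
  - intros t Ht; apply Hf; exact Ht.
  - rewrite StepFun_P18; ring.
Qed.

Definition two_step (q v1 v2 t : R) : R := if Rle_dec t q then v1 else v2.

Lemma two_step_adapted p q r v1 v2 : p <= q <= r ->
  adapted_couple (two_step q v1 v2) p r (p :: q :: r :: nil) (v1 :: v2 :: nil).
Proof.
  intros Hq. repeat split.
  - intros i Hi. destruct i as [|[|i]]; simpl in *; lra || lia.
  - simpl; rewrite Rmin_left; lra.
  - simpl; rewrite Rmax_right; lra.
  - intros i Hi t Ht. unfold open_interval, two_step in *.
    destruct i as [|[|i]]; simpl in *; [| | lia]; destruct (Rle_dec t q); lra.
Qed.

Lemma lower_sums_two_step f p q r v1 v2 : p <= q <= r ->
  (forall t, p <= t <= q -> v1 <= f t) -> (forall t, q < t <= r -> v2 <= f t) ->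
  lower_sums f p r (v1 * (q - p) + v2 * (r - q)).
Proof.
  intros Hq Hv1 Hv2.
  exists (mkStepFun (existT _ (p :: q :: r :: nil)%list
            (existT _ (v1 :: v2 :: nil)%list (two_step_adapted p q r v1 v2 Hq)))).
  split.
  - intros t Ht. simpl. unfold two_step.
    destruct (Rle_dec t q); [apply Hv1 | apply Hv2]; lra.
  - unfold RiemannInt_SF. destruct (Rle_dec p r); [simpl; ring | lra].
Qed.

Lemma exp_le x y : x <= y -> exp x <= exp y.
Proof. intros [Hlt|<-]; [left; apply exp_increasing; exact Hlt | lra]. Qed.

Lemma Rpower_pos t e : 0 < Rpower t e.
Proof. apply exp_pos. Qed.

Lemma Rle_Rpower_l_nonpos e s t : e <= 0 -> 0 < s <= t -> Rpower t e <= Rpower s e.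
Proof.
  intros He Hst. apply exp_le.
  assert (ln s <= ln t) by (destruct (Req_dec s t) as [<-|]; [lra | left; apply ln_increasing; lra]).
  nra.
Qed.

Lemma Rpower_le_id t e : 0 <= e <= 1 -> 1 <= t -> Rpower t e <= t.
Proof. intros He Ht. rewrite <- (Rpower_1 t) at 2 by lra. apply Rle_Rpower; lra. Qed.

Lemma Rpower_half_le al s : 0 <= al <= 1 -> 0 < s -> Rpower (s / 2) (al - 1) <= 2 * Rpower s (al - 1).
Proof.
  intros Ha Hs. unfold Rdiv. rewrite <- Rpower_mult_distr by lra.
  rewrite Rmult_comm. apply Rmult_le_compat_r; [left; apply Rpower_pos|].
  unfold Rpower. rewrite ln_Rinv by lra. rewrite <- (exp_ln 2) at 2 by lra.
  apply exp_le. assert (0 < ln 2) by (rewrite <- ln_1; apply ln_increasing; lra). nra.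
Qed.

Definition pos_power (al t : R) : R := if Rlt_dec 0 t then Rpower t al else 0.

Lemma pos_power_nonpos al t : t <= 0 -> pos_power al t = 0.
Proof. intros; unfold pos_power; destruct Rlt_dec; lra. Qed.

Lemma pos_power_pos al t : 0 < t -> pos_power al t = Rpower t al.
Proof. intros; unfold pos_power; destruct Rlt_dec; lra. Qed.

Lemma pos_power_le al s t : 0 <= al -> s <= t -> pos_power al s <= pos_power al t.
Proof.
  intros Ha Hst. unfold pos_power.
  destruct (Rlt_dec 0 s), (Rlt_dec 0 t); try lra.
  - apply Rle_Rpower_l; lra.
  - left; apply Rpower_pos.
Qed.

(* Concavity of [t^al], via the mean value theorem. *)
Lemma pos_power_increment_ge al u w : 0 < al < 1 -> 0 <= w < u ->
  al * (u - w) * Rpower u (al - 1) <= pos_power al u - pos_power al w.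
Proof.
  intros Ha Hw. rewrite (pos_power_pos al u) by lra.
  assert (Hu : u * Rpower u (al - 1) = Rpower u al).
  { rewrite <- (Rpower_1 u) at 1 by lra. rewrite <- Rpower_plus. f_equal; ring. }
  destruct (Req_dec w 0) as [->|Hw0].
  - rewrite pos_power_nonpos by lra. generalize (Rpower_pos u al); nra.
  - rewrite (pos_power_pos al w) by lra.
    destruct (MVT_cor2 (fun t => Rpower t al) (fun t => al * Rpower t (al - 1)) w u)
      as [c [Hc Hwcu]]; [lra | intros c Hc; apply derivable_pt_lim_power; lra |].
    rewrite Hc.
    assert (Rpower u (al - 1) <= Rpower c (al - 1)) by (apply Rle_Rpower_l_nonpos; lra).
    assert (0 <= al * (u - w) * (Rpower c (al - 1) - Rpower u (al - 1))) by (apply Rmult_le_pos; nra).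
    nra.
Qed.

Definition riesz_kernel (al x t : R) : R := Rpower (Rabs (x - t)) (al - 1).

Lemma riesz_kernel_pos al x t : 0 < riesz_kernel al x t.
Proof. apply Rpower_pos. Qed.

Lemma riesz_kernel_le1 al x t : al <= 1 -> 1 <= Rabs (x - t) -> riesz_kernel al x t <= 1.
Proof.
  intros Ha Hxt. unfold riesz_kernel, Rpower.
  apply Rle_trans with (exp 0); [apply exp_le | rewrite exp_0; lra].
  assert (0 <= ln (Rabs (x - t))).
  { rewrite <- ln_1. destruct Hxt as [Hlt|Heq]; [left; apply ln_increasing; lra | rewrite Heq; lra]. }
  nra.
Qed.

(* An antiderivative of [al * riesz_kernel al x] in [y]. *)
Definition kernel_primitive (al x y : R) : R := pos_power al (y - x) - pos_power al (x - y).

Lemma kernel_primitive_le al x y1 y2 : 0 <= al -> y1 <= y2 ->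
  kernel_primitive al x y1 <= kernel_primitive al x y2.
Proof.
  intros Ha Hy. unfold kernel_primitive.
  assert (pos_power al (y1 - x) <= pos_power al (y2 - x)) by (apply pos_power_le; lra).
  assert (pos_power al (x - y2) <= pos_power al (x - y1)) by (apply pos_power_le; lra).
  lra.
Qed.

(* Only the value at the midpoint matters; it is at most [2 (x-c)^(al-1)], and by
   concavity [(d-c) (x-c)^(al-1)] is at most the increment of the primitive. *)
Lemma upper_primitive_riesz_kernel_left al x E c d : 0 < al < 1 -> 0 <= E -> c < d <= x ->
  upper_primitive (fun t => E * riesz_kernel al x t)
    (fun y => 2 * E / al * kernel_primitive al x y) c d.
Proof.
  intros Ha HE Hcd. apply upper_primitive_of_point with ((c + d) / 2); [lra|].
  unfold riesz_kernel, kernel_primitive. rewrite Rabs_right by lra.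
  rewrite !(pos_power_nonpos al (_ - x)) by lra.
  set (u := Rpower (x - c) (al - 1)).
  assert (Hmid : Rpower (x - (c + d) / 2) (al - 1) <= 2 * u).
  { apply Rle_trans with (Rpower ((x - c) / 2) (al - 1));
      [apply Rle_Rpower_l_nonpos | apply Rpower_half_le]; lra. }
  assert (Htan := pos_power_increment_ge al (x - c) (x - d) Ha ltac:(lra)).
  fold u in Htan. replace (x - c - (x - d)) with (d - c) in Htan by ring.
  set (D := pos_power al (x - c) - pos_power al (x - d)) in *.
  assert (Hu : (d - c) * u <= D / al).
  { apply Rmult_le_reg_l with al; [lra|]. field_simplify; lra. }
  replace (2 * E / al * (0 - pos_power al (x - d)) - 2 * E / al * (0 - pos_power al (x - c)))
    with (2 * E * (D / al)) by (unfold D; field; lra).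
  apply Rle_trans with (2 * E * ((d - c) * u)); [|apply Rmult_le_compat_l; lra].
  assert (0 <= E * (2 * u - Rpower (x - (c + d) / 2) (al - 1)) * (d - c))
    by (apply Rmult_le_pos; [apply Rmult_le_pos|]; lra).
  nra.
Qed.

Lemma upper_primitive_riesz_kernel al x E : 0 < al < 1 -> 0 <= E ->
  forall c d, c < d -> upper_primitive (fun t => E * riesz_kernel al x t)
    (fun y => 2 * E / al * kernel_primitive al x y) c d.
Proof.
  intros Ha HE. apply upper_primitive_by_regions with x x; [lra | | intros; lra |].
  - intros c d Hcd; apply upper_primitive_riesz_kernel_left; lra.
  - intros c d Hc Hcd.
    assert (P := upper_primitive_reflect _ _ _ _
      (upper_primitive_riesz_kernel_left al (- x) E (- d) (- c) Ha HE ltac:(lra))).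
    rewrite !Ropp_involutive in P.
    refine (upper_primitive_weaken _ _ _ _ _ _ _ _ P); cbv beta.
    + intros t _. unfold riesz_kernel.
      replace (- x - - t) with (- (x - t)) by ring. rewrite Rabs_Ropp; lra.
    + unfold kernel_primitive.
      replace (- d - - x) with (x - d) by ring. replace (- x - - d) with (d - x) by ring.
      replace (- c - - x) with (x - c) by ring. replace (- x - - c) with (c - x) by ring.
      lra.
Qed.

Lemma upper_primitive_exp c d : c < d -> upper_primitive exp exp c d.
Proof. intros Hcd. apply upper_primitive_of_derivative; [exact Hcd|]. intros; apply derivable_pt_lim_exp. Qed.

Lemma sigma_int_finite a b : a <= b -> int_finite sigma_dens a b.
Proof.
  intros Hab. apply int_finite_of_lower_sums_le with (exp b * b - exp b * a).
  apply (lower_sum_le_increment _ (fun y => exp b * y)); [exact Hab|].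
  intros c d Hc Hcd Hd. apply upper_primitive_const with (exp b); [exact Hcd | |lra].
  intros t Ht; apply exp_le; lra.
Qed.

Lemma sigma_meas_ge p q r : p <= q <= r -> exp q * (r - q) <= sigma_meas p r.
Proof.
  intros Hq. unfold sigma_meas. apply lower_sum_le_nnint; [apply sigma_int_finite; lra|].
  replace (exp q * (r - q)) with (0 * (q - p) + exp q * (r - q)) by ring.
  apply lower_sums_two_step; [exact Hq | intros; left; apply exp_pos | intros; apply exp_le; lra].
Qed.

Lemma omega_dens_le1 t : omega_dens t <= 1.
Proof. unfold omega_dens; destruct (Rle_dec 0 t); [destruct (Rle_dec t 1)|]; lra. Qed.

Lemma omega_meas_ge1 b : 1 <= b -> 1 <= omega_meas 0 b.
Proof.
  intros Hb. unfold omega_meas. apply lower_sum_le_nnint.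
  - apply int_finite_of_lower_sums_le with (1 * b - 1 * 0).
    apply (lower_sum_le_increment _ (fun y => 1 * y)); [lra|].
    intros c d _ Hcd _. apply upper_primitive_const with 1; [exact Hcd | |lra].
    intros; apply omega_dens_le1.
  - replace 1 with (1 * (1 - 0) + 0 * (b - 1)) at 1 by ring.
    apply lower_sums_two_step; [lra | |].
    + intros t Ht. unfold omega_dens. destruct (Rle_dec 0 t); [destruct (Rle_dec t 1)|]; lra.
    + intros t Ht. unfold omega_dens. destruct (Rle_dec 0 t); [destruct (Rle_dec t 1)|]; lra.
Qed.

Lemma cube_lt_exp b : 1 < b -> b ^ 3 / 27 < exp (b - 1).
Proof.
  intros Hb. set (y := (b - 1) / 3).
  assert (Hexp : exp (b - 1) = exp y * exp y * exp y)
    by (rewrite <- !exp_plus; f_equal; unfold y; field).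
  assert (Hy : 1 + y < exp y) by (apply exp_ineq1; unfold y; lra).
  assert (Hy0 : 0 < 1 + y) by (unfold y; lra).
  assert (Hsq : (1 + y) * (1 + y) < exp y * exp y) by (apply Rmult_le_0_lt_compat; lra).
  assert ((1 + y) * (1 + y) * (1 + y) < exp y * exp y * exp y)
    by (apply Rmult_le_0_lt_compat; nra).
  unfold y in *. nra.
Qed.

Lemma Rpower_le_sqr b e : 1 <= b -> e <= 2 -> Rpower b e <= b ^ 2.
Proof.
  intros Hb He. rewrite <- Rpower_pow by lra. apply Rle_Rpower; [lra | simpl; lra].
Qed.

Lemma A2_quot_unbounded al : 0 < al -> forall M, exists a b, a < b /\ M < A2_quot al a b.
Proof.
  intros Ha M. set (b := 27 * Rabs M + 27).
  assert (HM : 0 <= Rabs M) by apply Rabs_pos.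
  exists 0, b. split; [unfold b; lra|].
  assert (Hsigma := sigma_meas_ge 0 (b - 1) b ltac:(unfold b; lra)).
  replace (b - (b - 1)) with 1 in Hsigma by ring.
  assert (Homega := omega_meas_ge1 b ltac:(unfold b; lra)).
  assert (Hcube := cube_lt_exp b ltac:(unfold b; lra)).
  set (P := Rpower (b - 0) (2 * (1 - al))).
  assert (HP0 : 0 < P) by apply Rpower_pos.
  assert (HP : P <= b ^ 2) by (unfold P; rewrite Rminus_0_r; apply Rpower_le_sqr; unfold b; lra).
  assert (Hprod : exp (b - 1) <= sigma_meas 0 b * omega_meas 0 b)
    by (generalize (exp_pos (b - 1)); nra).
  assert (HMb : Rabs M * b ^ 2 < b ^ 3 / 27)
    by (replace (b ^ 3 / 27) with (b ^ 2 * (b / 27)) by field; unfold b; nra).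
  assert (M * P <= Rabs M * b ^ 2)
    by (apply Rle_trans with (Rabs M * P); [apply Rmult_le_compat_r; [lra | apply Rle_abs]
                                          | apply Rmult_le_compat_l; lra]).
  unfold A2_quot. fold P. apply (Rmult_lt_reg_r P); [exact HP0|].
  unfold Rdiv. rewrite Rmult_assoc, Rinv_l by lra. lra.
Qed.

Definition clamp (lo hi y : R) : R := Rmax lo (Rmin y hi).

Lemma clamp_in lo hi y : lo <= y <= hi -> clamp lo hi y = y.
Proof. intros; unfold clamp, Rmax, Rmin; repeat destruct Rle_dec; lra. Qed.

Lemma clamp_lo lo hi y : lo <= hi -> y <= lo -> clamp lo hi y = lo.
Proof. intros; unfold clamp, Rmax, Rmin; repeat destruct Rle_dec; lra. Qed.

Lemma clamp_hi lo hi y : lo <= hi -> hi <= y -> clamp lo hi y = hi.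
Proof. intros; unfold clamp, Rmax, Rmin; repeat destruct Rle_dec; lra. Qed.

Lemma clamp_bounds lo hi y : lo <= hi -> lo <= clamp lo hi y <= hi.
Proof. intros; unfold clamp, Rmax, Rmin; repeat destruct Rle_dec; lra. Qed.

Lemma clamp_le lo hi y1 y2 : y1 <= y2 -> clamp lo hi y1 <= clamp lo hi y2.
Proof. intros; unfold clamp, Rmax, Rmin; repeat destruct Rle_dec; lra. Qed.

Lemma clamp_increment_le lo hi y1 y2 : y1 <= y2 -> clamp lo hi y2 - clamp lo hi y1 <= y2 - y1.
Proof. intros; unfold clamp, Rmax, Rmin; repeat destruct Rle_dec; lra. Qed.

(* Near [x] the density [exp t] is at most [exp 2] and the kernel primitive does the
   work; away from [x] the kernel is at most [1] and [exp] is its own primitive. *)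
Lemma upper_primitive_frac_kernel al x : 0 < al < 1 -> 0 <= x <= 1 ->
  forall c d, c < d -> upper_primitive (frac_kernel al x)
    (fun y => 2 * exp 2 / al * kernel_primitive al x (clamp (-1) 2 y) + exp y) c d.
Proof.
  intros Ha Hx.
  assert (Pfar : forall c d, c < d -> clamp (-1) 2 c = clamp (-1) 2 d ->
      (forall t, c < t < d -> 1 <= Rabs (x - t)) ->
      upper_primitive (frac_kernel al x)
        (fun y => 2 * exp 2 / al * kernel_primitive al x (clamp (-1) 2 y) + exp y) c d).
  { intros c d Hcd Hcl Hfar.
    refine (upper_primitive_weaken _ _ _ _ _ _ _ _ (upper_primitive_exp c d Hcd)); cbv beta.
    - intros t Ht. unfold frac_kernel, sigma_dens. fold (riesz_kernel al x t).
      assert (riesz_kernel al x t <= 1) by (apply riesz_kernel_le1; [lra | apply Hfar; exact Ht]).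
      generalize (exp_pos t); nra.
    - rewrite Hcl; lra. }
  apply upper_primitive_by_regions with (-1) 2; [lra | | |].
  - intros c d Hcd. apply Pfar; [lra | rewrite !clamp_lo; lra |].
    intros t Ht; rewrite Rabs_right; lra.
  - intros c d Hc Hcd.
    refine (upper_primitive_weaken _ _ _ _ _ _ _ _
      (upper_primitive_riesz_kernel al x (exp 2) Ha ltac:(left; apply exp_pos) c d ltac:(lra)));
      cbv beta.
    + intros t Ht. unfold frac_kernel, sigma_dens. fold (riesz_kernel al x t).
      assert (exp t <= exp 2) by (apply exp_le; lra).
      generalize (riesz_kernel_pos al x t); nra.
    + rewrite !clamp_in by lra. assert (exp c <= exp d) by (apply exp_le; lra). lra.
  - intros c d Hc Hcd. apply Pfar; [lra | rewrite !clamp_hi; lra |].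
    intros t Ht; rewrite Rabs_left1; lra.
Qed.

Lemma I_alpha_sigma_ge0 al a b x : a <= b -> 0 <= I_alpha_sigma al a b x.
Proof.
  intros Hab. apply nnint_ge0; [exact Hab|]. intros t _.
  unfold frac_kernel, sigma_dens. generalize (Rpower_pos (Rabs (x - t)) (al - 1)) (exp_pos t); nra.
Qed.

Lemma I_alpha_sigma_le al a b x : 0 < al < 1 -> a <= b -> 0 <= x <= 1 ->
  I_alpha_sigma al a b x <= 6 * exp 2 / al + exp b.
Proof.
  intros Ha Hab Hx.
  assert (HK : 0 < exp 2 / al) by (apply Rdiv_lt_0_compat; [apply exp_pos | lra]).
  apply nnint_le; [generalize (exp_pos b); lra|]. intros r Hr.
  eapply Rle_trans; [exact (lower_sum_le_increment _ _ a b Hab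
    (fun c d _ Hcd _ => upper_primitive_frac_kernel al x Ha Hx c d Hcd) r Hr)|].
  assert (Hmono : kernel_primitive al x (clamp (-1) 2 b) - kernel_primitive al x (clamp (-1) 2 a)
                  <= kernel_primitive al x 2 - kernel_primitive al x (-1)).
  { assert (Hb := clamp_bounds (-1) 2 b ltac:(lra)). assert (Ha' := clamp_bounds (-1) 2 a ltac:(lra)).
    assert (kernel_primitive al x (clamp (-1) 2 b) <= kernel_primitive al x 2)
      by (apply kernel_primitive_le; lra).
    assert (kernel_primitive al x (-1) <= kernel_primitive al x (clamp (-1) 2 a))
      by (apply kernel_primitive_le; lra).
    lra. }
  assert (H3 : kernel_primitive al x 2 - kernel_primitive al x (-1) <= 3).
  { unfold kernel_primitive.
    rewrite (pos_power_nonpos al (x - 2)), (pos_power_nonpos al (-1 - x)),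
      (pos_power_pos al (2 - x)), (pos_power_pos al (x - -1)) by lra.
    assert (Rpower (2 - x) al <= 2 - x) by (apply Rpower_le_id; lra).
    assert (Rpower (x - -1) al <= x - -1) by (apply Rpower_le_id; lra).
    lra. }
  assert (Hea : 0 < exp a) by apply exp_pos.
  replace (6 * exp 2 / al) with (2 * exp 2 / al * 3) by (field; lra).
  assert (2 * exp 2 / al * (kernel_primitive al x (clamp (-1) 2 b)
            - kernel_primitive al x (clamp (-1) 2 a)) <= 2 * exp 2 / al * 3)
    by (apply Rmult_le_compat_l; lra).
  lra.
Qed.

Lemma frac_kernel_int_finite al x a b : 0 < al < 1 -> a <= b -> int_finite (frac_kernel al x) a b.
Proof.
  intros Ha Hab.
  apply int_finite_of_lower_sums_le with
    (2 * exp b / al * kernel_primitive al x b - 2 * exp b / al * kernel_primitive al x a).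
  apply (lower_sum_le_increment _ (fun y => 2 * exp b / al * kernel_primitive al x y)); [exact Hab|].
  intros c d Hc Hcd Hd.
  refine (upper_primitive_weaken _ _ _ _ _ _ _ (Rle_refl _)
    (upper_primitive_riesz_kernel al x (exp b) Ha ltac:(left; apply exp_pos) c d Hcd)).
  intros t Ht. unfold frac_kernel, sigma_dens. fold (riesz_kernel al x t).
  assert (exp t <= exp b) by (apply exp_le; lra).
  generalize (riesz_kernel_pos al x t); nra.
Qed.

Lemma upper_primitive_omega B : 0 <= B ->
  forall c d, c < d -> upper_primitive (fun t => B * omega_dens t) (fun y => B * clamp 0 1 y) c d.
Proof.
  intros HB. apply upper_primitive_by_regions with 0 1; [lra | | |].
  - intros c d Hcd. apply upper_primitive_const with 0; [lra | |].
    + intros t Ht. unfold omega_dens. destruct (Rle_dec 0 t); lra.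
    + rewrite !clamp_lo by lra. lra.
  - intros c d Hc Hcd. apply upper_primitive_const with B; [lra | |].
    + intros t _. generalize (omega_dens_le1 t); nra.
    + rewrite !clamp_in by lra. lra.
  - intros c d Hc Hcd. apply upper_primitive_const with 0; [lra | |].
    + intros t Ht. unfold omega_dens. destruct (Rle_dec 0 t); [destruct (Rle_dec t 1)|]; lra.
    + rewrite !clamp_hi by lra. lra.
Qed.

Lemma testing_lower_sum_le al a b : 0 < al < 1 -> a < b ->
  forall r, lower_sums (testing_integrand al a b) a b r ->
  r <= (6 * exp 2 / al + exp b) ^ 2 * (clamp 0 1 b - clamp 0 1 a).
Proof.
  intros Ha Hab r Hr. set (B := (6 * exp 2 / al + exp b) ^ 2).
  replace (B * (clamp 0 1 b - clamp 0 1 a)) with (B * clamp 0 1 b - B * clamp 0 1 a) by ring.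
  refine (lower_sum_le_increment _ (fun y => B * clamp 0 1 y) a b ltac:(lra) _ r Hr).
  intros c d Hc Hcd Hd.
  refine (upper_primitive_weaken _ _ _ _ _ _ _ (Rle_refl _)
    (upper_primitive_omega B ltac:(apply pow2_ge_0) c d Hcd)).
  intros t Ht. unfold testing_integrand, omega_dens.
  destruct (Rle_dec 0 t); [destruct (Rle_dec t 1)|]; try lra.
  assert (H0 := I_alpha_sigma_ge0 al a b t ltac:(lra)).
  assert (H1 := I_alpha_sigma_le al a b t Ha ltac:(lra) ltac:(lra)).
  unfold B. nra.
Qed.

(* With [L = b - a] and [delta = min L 1]: the overlap of [[a,b]] with [[0,1]] has
   length at most [delta], and [[b + L - delta, b + L]] carries sigma-mass at least
   [exp (b + L - delta) * delta], which beats [exp (2b - 2)] because [a < 1]. *)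
Lemma overlap_weight_le_sigma_3I K a b : 0 <= K -> a < b ->
  (K + exp b) ^ 2 * (clamp 0 1 b - clamp 0 1 a)
    <= (2 * K ^ 2 + 2 * exp 2) * sigma_meas (a - (b - a)) (b + (b - a)).
Proof.
  intros HK Hab. set (L := b - a).
  assert (Hsig0 : 0 <= sigma_meas (a - L) (b + L))
    by (apply nnint_ge0; [unfold L; lra | intros; left; apply exp_pos]).
  assert (HC : 0 <= 2 * K ^ 2 + 2 * exp 2) by (generalize (exp_pos 2); nra).
  destruct (Rle_dec (clamp 0 1 b - clamp 0 1 a) 0) as [Hz|Hz].
  { generalize (clamp_le 0 1 a b ltac:(lra)); intros.
    replace (clamp 0 1 b - clamp 0 1 a) with 0 by lra. rewrite Rmult_0_r.
    apply Rmult_le_pos; lra. }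
  assert (Hb : 0 < b) by (destruct (Rle_dec b 0); [rewrite !clamp_lo in Hz by lra|]; lra).
  assert (Ha1 : a < 1) by (destruct (Rle_dec 1 a); [rewrite !clamp_hi in Hz by lra|]; lra).
  set (delta := Rmin L 1). set (q := b + L - delta).
  assert (Hdelta : 0 < delta <= 1 /\ delta <= L)
    by (unfold delta, L, Rmin; destruct Rle_dec; lra).
  assert (Hsig := sigma_meas_ge (a - L) q (b + L) ltac:(unfold q, L in *; lra)).
  replace (b + L - q) with delta in Hsig by (unfold q; ring).
  assert (Hov : clamp 0 1 b - clamp 0 1 a <= delta).
  { generalize (clamp_increment_le 0 1 a b ltac:(lra)) (clamp_bounds 0 1 b ltac:(lra))
      (clamp_bounds 0 1 a ltac:(lra)).
    unfold delta, Rmin, L; destruct Rle_dec; lra. }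
  assert (Hq : 1 <= exp q) by (rewrite <- exp_0; apply exp_le; unfold q; lra).
  assert (Hexp : exp b ^ 2 <= exp 2 * exp q).
  { replace (exp b ^ 2) with (exp (b + b)) by (rewrite exp_plus; ring).
    rewrite <- exp_plus. apply exp_le. unfold q, delta, L, Rmin in *; destruct Rle_dec; lra. }
  assert (Hsq : (K + exp b) ^ 2 <= (2 * K ^ 2 + 2 * exp 2) * exp q)
    by (generalize (pow2_ge_0 (K - exp b)); nra).
  apply Rle_trans with ((K + exp b) ^ 2 * delta); [apply Rmult_le_compat_l; [apply pow2_ge_0 | exact Hov]|].
  apply Rle_trans with ((2 * K ^ 2 + 2 * exp 2) * (exp q * delta)); [|apply Rmult_le_compat_l; lra].
  rewrite <- Rmult_assoc. apply Rmult_le_compat_r; lra.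
Qed.

Theorem mainTheorem5 (alpha : R) (Ha : 0 < alpha < 1) :
  (* A_2^alpha(sigma, omega) = +infinity *)
  (forall M : R, exists a b : R, a < b /\ M < A2_quot alpha a b) /\
  (* the testing condition with 3I holds with a finite constant *)
  (exists C : R, forall a b : R, a < b ->
     (forall x : R, int_finite (frac_kernel alpha x) a b) /\
     int_finite (testing_integrand alpha a b) a b /\
     nnint (testing_integrand alpha a b) a b
       <= C * sigma_meas (a - (b - a)) (b + (b - a))).
Proof.
  split; [apply A2_quot_unbounded; lra|].
  set (K := 6 * exp 2 / alpha).
  assert (HK : 0 <= K) by (apply Rlt_le, Rdiv_lt_0_compat; [generalize (exp_pos 2) |]; lra).
  exists (2 * K ^ 2 + 2 * exp 2). intros a b Hab.
  assert (Hlower := testing_lower_sum_le alpha a b Ha Hab). fold K in Hlower.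
  split; [intros x; apply frac_kernel_int_finite; lra|].
  split; [exact (int_finite_of_lower_sums_le _ _ _ _ Hlower)|].
  apply Rle_trans with ((K + exp b) ^ 2 * (clamp 0 1 b - clamp 0 1 a)).
  - apply nnint_le; [|exact Hlower].
    apply Rmult_le_pos; [apply pow2_ge_0 | generalize (clamp_le 0 1 a b ltac:(lra)); lra].
  - apply overlap_weight_le_sigma_3I; lra.
Qed.
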